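(* Let $f$ be a transformation of a finite set $\Omega$ and let $G$ be a group of permutations of $\Omega$. If there exists $g\in G$ such that $\mathrm{rank}(fgf)=\mathrm{rank}(f)$, then there exists an idempotent $e$ in the semigroup $\langle f,G\rangle$ such that $e$ and $f$ have the same kernel.
   Context: Maps act on $\Omega$ and $fgf$ denotes ''apply $f$, then $g$, then $f$''. The rank of a map $h$ is $|\Omega h|$; the kernel of $h$ is the partition of $\Omega$ induced by the equivalence relation $\{(x,y): xh=yh\}$. An idempotent is a map $e$ with $e\circ e=e$. *)

(* Maps on a finite set Omega = T : finType are finite
   functions {ffun T -> T}; maps act on the right, so [fcomp a b] is
   "apply a, then b". *)
From mathcomp Require Import all_boot fingroup perm.
Set Implicit Arguments. Unset Strict Implicit. Unset Printing Implicit Defensive.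

Section Trans.
Variable T : finType.

Definition fcomp (a b : {ffun T -> T}) : {ffun T -> T} := [ffun x => b (a x)].

Definition perm_fun (g : {perm T}) : {ffun T -> T} := [ffun x => g x].

Definition trank (h : {ffun T -> T}) : nat := #|[set h x | x : T]|.

Definition tker (h : {ffun T -> T}) : {set {set T}} :=
  [set [set y | h y == h x] | x : T].

Definition tidem (e : {ffun T -> T}) : Prop := fcomp e e = e.

Inductive in_sgen (f : {ffun T -> T}) (G : {group {perm T}}) :
    {ffun T -> T} -> Prop :=
  | sgen_f : in_sgen f G f
  | sgen_G g : g \in G -> in_sgen f G (perm_fun g)
  | sgen_comp a b : in_sgen f G a -> in_sgen f G b -> in_sgen f G (fcomp a b).

End Trans.

(* Put u := f g.  Since f g f has the rank of f, the map f, and hence u, is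
   injective on the image of u; so every positive power of u has the kernel of
   u, which is the kernel of f.  Some positive power of u is idempotent, as in
   any finite semigroup. *)
From mathcomp Require Import all_boot fingroup perm.
Set Implicit Arguments. Unset Strict Implicit. Unset Printing Implicit Defensive.

Section Transformations.
Variable T : finType.
Implicit Types (a b h : {ffun T -> T}) (g : {perm T}).

Definition tpow h n : {ffun T -> T} := [ffun x => iter n h x].

Lemma tpowE h n x : tpow h n x = iter n h x.
Proof. by rewrite ffunE. Qed.

Lemma tpow1 h : tpow h 1 = h.
Proof. by apply/ffunP => x; rewrite ffunE. Qed.

Lemma fcomp_tpow h m n : fcomp (tpow h m) (tpow h n) = tpow h (n + m).
Proof. by apply/ffunP => x; rewrite !ffunE iterD. Qed.

Lemma tpowS_sgen f G h n : in_sgen f G h -> in_sgen f G (tpow h n.+1).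
Proof.
move=> hS; elim: n => [|n IH]; first by rewrite tpow1.
by rewrite -addn1 -fcomp_tpow; apply: sgen_comp; rewrite // tpow1.
Qed.

Lemma tpow_traject h k : iter k (fun a => fcomp a h) (tpow h 0) = tpow h k.
Proof. by elim: k => [|k IH] //=; rewrite IH -{2}(tpow1 h) fcomp_tpow. Qed.

Lemma tpow_eventually_periodic h : exists i j, i < j /\ tpow h j = tpow h i.
Proof.
pose F a := fcomp a h.
have /trajectP[i lt_i] := looping_order F (tpow h 0).
by rewrite !tpow_traject => Eij; exists i, (fingraph.order F (tpow h 0)).
Qed.

Lemma tpow_periodic h i j k m : i <= j -> tpow h j = tpow h i -> i <= k ->
  tpow h (k + m * (j - i)) = tpow h k.
Proof.
move=> le_ij Eij; elim: m k => [|m IH] k le_ik; first by rewrite mul0n addn0.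
rewrite mulSn addnA IH; last exact: leq_trans le_ik (leq_addr _ _).
rewrite -(subnK le_ik) -addnA subnKC //.
by rewrite -[LHS]fcomp_tpow -[RHS]fcomp_tpow Eij.
Qed.

Lemma tpow_idem_exists h : exists2 n, 0 < n & tidem (tpow h n).
Proof.
have [i [j [lt_ij Eij]]] := tpow_eventually_periodic h.
have p_gt0 : 0 < j - i by rewrite subn_gt0.
(* a multiple of the period that is past the preperiod *)
set n := i.+1 * (j - i).
have le_in : i <= n by rewrite ltnW // leq_pmulr.
exists n; first by rewrite muln_gt0 p_gt0.
by rewrite /tidem fcomp_tpow (tpow_periodic i.+1 (ltnW lt_ij) Eij le_in).
Qed.

Lemma iter_eq_stable (h : T -> T) : {in [set h x | x : T] &, injective h} ->
  forall n x y, (iter n.+1 h x == iter n.+1 h y) = (h x == h y).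
Proof.
move=> h_inj; elim=> [//|n IH] x y.
by rewrite [LHS]/= (inj_in_eq h_inj) ?IH // imset_f.
Qed.

Lemma trank_fcomp_inj a b :
  trank (fcomp a b) = trank a -> {in [set a x | x : T] &, injective b}.
Proof.
rewrite /trank; have -> : [set fcomp a b x | x : T] = b @: [set a x | x : T].
  by rewrite -imset_comp; apply: eq_imset => x; rewrite ffunE.
by move=> Hrank; apply/imset_injP/eqP.
Qed.

Lemma trank_fcomp_perm a g : trank (fcomp a (perm_fun g)) = trank a.
Proof.
rewrite /trank; have -> : [set fcomp a (perm_fun g) x | x : T] = g @: [set a x | x : T].
  by rewrite -imset_comp; apply: eq_imset => x; rewrite !ffunE.
exact/card_imset/perm_inj.
Qed.

Lemma fcomp_perm_inj_in a g (A : {pred T}) :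
  {in A &, injective a} -> {in A &, injective (fcomp a (perm_fun g))}.
Proof. by move=> a_inj x y xA yA; rewrite !ffunE => /perm_inj; apply: a_inj. Qed.

Lemma fcomp_perm_eq a g x y :
  (fcomp a (perm_fun g) x == fcomp a (perm_fun g) y) = (a x == a y).
Proof. by rewrite !ffunE (inj_eq perm_inj). Qed.

Lemma tker_eq a b : (forall x y, (a x == a y) = (b x == b y)) -> tker a = tker b.
Proof. by move=> Eab; apply: eq_imset => x; apply/setP => y; rewrite !inE Eab. Qed.

End Transformations.

Theorem lemma11 (T : finType) (f : {ffun T -> T}) (G : {group {perm T}}) :
  (exists2 g : {perm T}, g \in G &
     trank (fcomp (fcomp f (perm_fun g)) f) = trank f) ->
  exists e : {ffun T -> T},
    [/\ in_sgen f G e, tidem e & tker e = tker f].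
Proof.
case=> g gG Hrank; set u := fcomp f (perm_fun g).
have u_sgen : in_sgen f G u by apply: sgen_comp; [apply: sgen_f | apply: sgen_G].
have u_inj : {in [set u x | x : T] &, injective u}.
  by apply/fcomp_perm_inj_in/trank_fcomp_inj; rewrite trank_fcomp_perm.
have [[//|n] _ e_idem] := tpow_idem_exists u.
exists (tpow u n.+1); split=> //; first exact: tpowS_sgen.
by apply: tker_eq => x y; rewrite !tpowE iter_eq_stable // fcomp_perm_eq.
Qed.
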